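(* For any even number $p$, the worst-case egalitarian rank of any balanced categorial sequential allocation mechanism with all agents pessimistic is $n^p-(n-1)p/2$. Moreover, balanced CSAMs have the smallest worst-case egalitarian rank among all CSAMs with all agents pessimistic.
   Context: Basic categorized domain: $n$ agents, $p$ categories $D_i=\{1,\ldots,n\}$ of indivisible items, bundles $\mathfrak D=D_1\times\cdots\times D_p$; each agent $j$ has a linear order $R_j$ over $\mathfrak D$; a profile is $P_n=(R_1,\ldots,R_n)$. $\mathrm{Rank}(R,\vec d)$ is the position of $\vec d$ in $R$ (top $=1$, bottom $=n^p$). CSAM $f_\mathcal O$: given a linear order $\mathcal O$ over $\{1,\ldots,n\}\times\{1,\ldots,p\}$, in rounds $t=1,\ldots,np$, if the $t$-th element of $\mathcal O$ is $(j,i)$ then agent $j$ chooses an item $d_{j,i}$ from $D_{i,t}$, the items of $D_i$ not yet chosen at the start of round $t$. Agent $j$ receives $f^j_\mathcal O(P_n)=(d_{j,1},\ldots,d_{j,p})$. A pessimistic agent $j$ choosing from $D_i$ in round $t$: a bundle is available to her if for each category $l$ from which she has already chosen its $l$-th component equals $d_{j,l}$ and for each other category $l$ its $l$-th component lies in $D_{l,t}$; she chooses the $d\in D_{i,t}$ for which her lowest-ranked available bundle with $i$-th component $d$ is highest in $R_j$. Balanced CSAM (for even $p$): given a linear order $\mathcal K=j_1\rhd\cdots\rhd j_n$ over agents, items are chosen in $p$ phases; in phase $i$ all agents choose from $D_i$, in the order $\mathcal K$ if $i$ is odd and in the reverse of $\mathcal K$ if $i$ is even. Worst-case egalitarian rank: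 $\max_{P_n}\max_{j}\mathrm{Rank}(R_j,f^j_\mathcal O(P_n))$ over all profiles of $n$ agents. *)

From mathcomp Require Import all_boot.
Set Implicit Arguments. Unset Strict Implicit. Unset Printing Implicit Defensive.

(* Categories D_i = {1..n} are modelled by 'I_n, categories by 'I_p. *)
Definition bundle (n p : nat) := {ffun 'I_p -> 'I_n}.

(* R e d  means  "e is ranked weakly above d" (e R d). *)
Definition lin_order (T : finType) (R : rel T) : Prop :=
  [/\ reflexive R, antisymmetric R, transitive R & total R].

(* position of d in R, top = 1 *)
Definition Rank (T : finType) (R : rel T) (d : T) : nat := #|[set e | R e d]|.

(* partial allocation: st (j,i) = Some d iff agent j already chose d from D_i *)
Definition state (n p : nat) := {ffun 'I_n * 'I_p -> option 'I_n}.

Definition remaining n p (st : state n p) (i : 'I_p) : {set 'I_n} :=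
  [set d : 'I_n | [forall j : 'I_n, st (j, i) != Some d]].

Definition available n p (st : state n p) (j : 'I_n) : {set bundle n p} :=
  [set b : bundle n p | [forall l : 'I_p,
      if st (j, l) is Some d then b l == d else b l \in remaining st l]].

Definition worst_val n p (R : rel (bundle n p)) (st : state n p)
    (j : 'I_n) (i : 'I_p) (d : 'I_n) : nat :=
  \max_(b in available st j | b i == d) Rank R b.

Definition pess_choice n p (R : rel (bundle n p)) (st : state n p)
    (j : 'I_n) (i : 'I_p) : option 'I_n :=
  [pick d in remaining st i |
     [forall d' in remaining st i, worst_val R st j i d <= worst_val R st j i d']].

Definition step n p (P : 'I_n -> rel (bundle n p)) (st : state n p)
    (x : 'I_n * 'I_p) : state n p :=
  [ffun y => if y == x then pess_choice (P x.1) st x.1 x.2 else st y].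

Definition run n p (P : 'I_n -> rel (bundle n p)) (O : seq ('I_n * 'I_p)) : state n p :=
  foldl (step P) [ffun => None] O.

(* f^j_O(P): bundle received by agent j (the default j is never used for a valid O) *)
Definition outcome n p (P : 'I_n -> rel (bundle n p)) (O : seq ('I_n * 'I_p))
    (j : 'I_n) : bundle n p :=
  [ffun l => odflt j (run P O (j, l))].

(* O is a linear order over {1..n} x {1..p}, listed from first to last *)
Definition csam_order n p (O : seq ('I_n * 'I_p)) : Prop :=
  perm_eq O (enum [set: 'I_n * 'I_p]).

Definition agent_order n (K : seq 'I_n) : Prop := perm_eq K (enum [set: 'I_n]).

(* balanced CSAM: phase i (1-indexed) uses K if i odd, rev K if i even;
   with 0-indexed i : 'I_p this is K for even i, rev K for odd i *)
Definition balanced_order n p (K : seq 'I_n) : seq ('I_n * 'I_p) :=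
  flatten [seq [seq (j, i) | j <- if odd i then rev K else K] | i : 'I_p <- enum 'I_p].

Definition profile n p (P : 'I_n -> rel (bundle n p)) : Prop :=
  forall j, lin_order (P j).

Definition worst_case_egal_rank n p (O : seq ('I_n * 'I_p)) (k : nat) : Prop :=
  (forall P, profile P -> forall j, Rank (P j) (outcome P O j) <= k) /\
  (exists P, profile P /\ exists j, Rank (P j) (outcome P O j) = k).

From mathcomp Require Import all_boot zify.
From Stdlib Require Import Classical_Prop.
Set Implicit Arguments. Unset Strict Implicit. Unset Printing Implicit Defensive.

(* Follow the rank W of the worst bundle still available to an agent j. When j chooses
   from D_i while r items of D_i are left, the r classes of available bundles (sorted by
   their i-th item) have pairwise distinct worst ranks, all at most W, and the pessimistic
   agent keeps the class with the smallest one, so W drops by at least r - 1. Hence j ends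
   at rank at most n^p - g_j, where g_j = sum_i (n - 1 - t_i) and t_i is the number of
   items of D_i taken before j's turn in D_i. In a balanced order t_i alternates between
   k and n - 1 - k, so every g_j equals (n - 1) p / 2; in any order the g_j add up to
   p n (n - 1) / 2, so some g_j is at most (n - 1) p / 2. The bound n^p - g_j is attained
   by a profile where the other agents always take the smallest remaining item and j puts
   at the bottom the bundles made of maximal items except one item she could still get:
   she is driven to the all-maximal bundle, which she ranks above at most g_j bundles. *)

Section Ranks.
Variable T : finType.
Implicit Types (R : rel T) (key : T -> nat).

Lemma Rank_lt R e d : lin_order R -> R e d -> e != d -> Rank R e < Rank R d.
Proof.
case=> Rrefl Ranti Rtrans _ Red Ned; apply/proper_card/properP; split.
  by apply/subsetP=> x; rewrite !inE => Rxe; exact: Rtrans Rxe Red.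
exists d; rewrite !inE ?Rrefl //; apply: contra Ned => Rde.
by rewrite (Ranti e d) ?Red.
Qed.

Lemma Rank_inj R : lin_order R -> injective (Rank R).
Proof.
move=> lin_R e d Eed; apply/eqP; apply: contraT => Ned.
have [_ _ _ Rtot] := lin_R; have Nde : d != e by rewrite eq_sym.
case/orP: (Rtot e d) => [Red | Rde].
  by move: (Rank_lt lin_R Red Ned); rewrite Eed ltnn.
by move: (Rank_lt lin_R Rde Nde); rewrite Eed ltnn.
Qed.

Definition tiebreak key (e : T) : nat := key e * #|T| + enum_rank e.

Definition key_rel key : rel T := fun e d => tiebreak key e <= tiebreak key d.

Lemma tiebreak_inj key : injective (tiebreak key).
Proof.
move=> e d E; apply/enum_rank_inj/val_inj.
have := congr1 (modn^~ #|T|) E.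
by rewrite /tiebreak !modnMDl !modn_small.
Qed.

Lemma tiebreak_lt key e d : key e < key d -> tiebreak key e < tiebreak key d.
Proof.
move=> lt_key; have lt_e : (enum_rank e : nat) < #|T| := ltn_ord _.
have : key e * #|T| + #|T| <= key d * #|T| by rewrite -mulSnr leq_mul2r lt_key orbT.
rewrite /tiebreak; lia.
Qed.

Lemma key_rel_lin key : lin_order (key_rel key).
Proof.
rewrite /key_rel; split=> [x | x y /andP[le_xy le_yx] | y x z | x y] /=.
- exact: leqnn.
- by apply: (@tiebreak_inj key); apply/anti_leq; rewrite le_xy le_yx.
- exact: leq_trans.
- exact: leq_total.
Qed.

Lemma Rank_key_lt key e d : key e < key d -> Rank (key_rel key) e < Rank (key_rel key) d.
Proof.
move=> lt_key; have lt_tb := tiebreak_lt lt_key.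
apply: Rank_lt (key_rel_lin key) (ltnW lt_tb) _.
by apply: contraTneq lt_tb => ->; rewrite ltnn.
Qed.

Lemma card_inj_window (S : {set T}) (f : T -> nat) lo hi :
  {in S &, injective f} -> (forall x, x \in S -> lo <= f x < hi) -> #|S| <= hi - lo.
Proof.
move=> f_inj f_win.
have uniq_fS : uniq [seq f x | x <- enum S].
  by rewrite map_inj_in_uniq ?enum_uniq // => x y; rewrite !mem_enum; exact: f_inj.
have sub_fS : {subset [seq f x | x <- enum S] <= iota lo (hi - lo)}.
  move=> k /mapP [x]; rewrite mem_enum => Sx ->; rewrite mem_iota.
  by case/andP: (f_win _ Sx); lia.
by have := uniq_leq_size uniq_fS sub_fS; rewrite size_map size_iota -cardE.
Qed.

End Ranks.

Lemma csam_uniq n p (O : seq ('I_n * 'I_p)) : csam_order O -> uniq O.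
Proof. by move=> O_perm; rewrite (perm_uniq O_perm) enum_uniq. Qed.

Lemma csam_mem n p (O : seq ('I_n * 'I_p)) x : csam_order O -> x \in O.
Proof. by move=> O_perm; rewrite (perm_mem O_perm) mem_enum inE. Qed.

Section Allocation.
Variables (n p : nat) (P : 'I_n -> rel (bundle n p)).
Notation bundle := (bundle n p).
Notation state := (state n p).
Notation slot := ('I_n * 'I_p)%type.
Implicit Types (st : state) (s : seq slot) (x : slot) (i l : 'I_p) (j : 'I_n).

Definition picks s i : nat := count (fun x : slot => x.2 == i) s.

Lemma picks_rcons s x i : picks (rcons s x) i = picks s i + (x.2 == i).
Proof. by rewrite /picks -cats1 count_cat /= addn0. Qed.

Lemma step_neq st x y : y != x -> step P st x y = st y.
Proof. by move=> Nyx; rewrite /step ffunE (negbTE Nyx). Qed.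

Lemma step_eq st x : step P st x x = pess_choice (P x.1) st x.1 x.2.
Proof. by rewrite /step ffunE eqxx. Qed.

Lemma remaining_step_neq st x l : l != x.2 -> remaining (step P st x) l = remaining st l.
Proof.
move=> Nl; apply/setP=> d; rewrite !inE; apply: eq_forallb => j.
by rewrite step_neq //; apply: contra Nl => /eqP <-.
Qed.

Lemma remaining_step_sub st x l : st x = None -> remaining (step P st x) l \subset remaining st l.
Proof.
move=> st_x; apply/subsetP=> d; rewrite !inE => /forallP free_d; apply/forallP=> j.
have := free_d j; have [->|Njl] := eqVneq (j, l) x; first by rewrite st_x.
by rewrite step_neq.
Qed.

Lemma remaining_step_eq st x d : st x = None -> step P st x x = Some d ->
  remaining (step P st x) x.2 = remaining st x.2 :\ d.
Proof.
move=> st_x pick_d; apply/setP=> e; rewrite !inE; apply/forallP/andP.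
  move=> free_e; split.
    by have := free_e x.1; rewrite -surjective_pairing pick_d; apply: contra => /eqP ->.
  apply/forallP=> j; have := free_e j; have [->|Nj] := eqVneq (j, x.2) x.
    by rewrite st_x.
  by rewrite step_neq.
case=> Ned /forallP free_e j; have [Ex|Nj] := eqVneq (j, x.2) x.
  by rewrite Ex pick_d; apply: contra Ned => /eqP [->].
by rewrite step_neq // free_e.
Qed.

Definition records st s : Prop :=
  (forall x, (st x != None) = (x \in s)) /\
  (forall i j1 j2 d, st (j1, i) = Some d -> st (j2, i) = Some d -> j1 = j2).

Lemma records_None st s x : records st s -> x \notin s -> st x = None.
Proof. by case=> st_s _ Nx; apply/eqP; rewrite -[_ == _]negbK st_s. Qed.

Lemma card_category_slots s i : uniq s -> #|[set j | (j, i) \in s]| = picks s i.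
Proof.
elim: s => [|[a b] s IHs] /=.
  by move=> _; apply/eqP; rewrite cards_eq0; apply/eqP/setP=> j; rewrite !inE.
case/andP=> Nab uniq_s; have [Eb|Nb] := eqVneq b i.
  subst b; have -> : [set j | (j, i) \in (a, i) :: s] = a |: [set j | (j, i) \in s].
    by apply/setP=> j; rewrite !inE xpair_eqE eqxx andbT.
  by rewrite cardsU1 inE Nab IHs.
rewrite add0n -IHs //; apply: eq_card => j; rewrite !inE xpair_eqE.
by rewrite [i == b]eq_sym (negbTE Nb) andbF.
Qed.

Lemma card_remaining st s i : records st s -> uniq s ->
  #|remaining st i| = n - picks s i.
Proof.
case=> st_s st_inj uniq_s; rewrite -card_category_slots //.
set J := [set j | (j, i) \in s]; pose f j := odflt j (st (j, i)).
have -> : remaining st i = ~: (f @: J).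
  apply/setP=> d; rewrite in_setC inE; apply/forallP/negP.
    move=> free_d /imsetP [j]; rewrite inE -st_s /f => Jj Ed.
    by move: Jj (free_d j); case: (st (j, i)) Ed => //= e -> _; rewrite eqxx.
  move=> Nd j; apply/negP=> /eqP st_j; apply: Nd; apply/imsetP; exists j.
    by rewrite inE -st_s st_j.
  by rewrite /f st_j.
have f_inj : {in J &, injective f}.
  move=> j1 j2; rewrite !inE -!st_s /f.
  case E1: (st (j1, i)) => [e1|] //; case E2: (st (j2, i)) => [e2|] // _ _ /= E12.
  by move: E1; rewrite E12; move/st_inj; apply.
by rewrite cardsCs setCK card_ord (card_in_imset f_inj).
Qed.

Lemma picks_lt s x : uniq s -> x \notin s -> picks s x.2 < n.
Proof.
move=> uniq_s Nx; rewrite -card_category_slots //.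
set A := [set j | (j, x.2) \in s].
apply: (@leq_trans (#|A| + #|~: A|)); last by rewrite cardsC card_ord.
rewrite -addn1 leq_add2l.
by apply/card_gt0P; exists x.1; rewrite !inE -surjective_pairing.
Qed.

Lemma remaining_nonempty st s x : records st s -> uniq s -> x \notin s ->
  exists e, e \in remaining st x.2.
Proof.
move=> rec_s uniq_s Nx; apply/card_gt0P.
by rewrite (card_remaining _ rec_s uniq_s) subn_gt0 picks_lt.
Qed.

Definition pessimistic_pick st x d :=
  [/\ step P st x x = Some d, d \in remaining st x.2 &
      forall d', d' \in remaining st x.2 ->
        worst_val (P x.1) st x.1 x.2 d <= worst_val (P x.1) st x.1 x.2 d'].

Lemma pessimistic_pick_exists st s x : records st s -> uniq s -> x \notin s ->
  exists d, pessimistic_pick st x d.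
Proof.
move=> rec_s uniq_s Nx; have [e rem_e] := remaining_nonempty rec_s uniq_s Nx.
rewrite /pessimistic_pick step_eq /pess_choice.
case: pickP => [d /andP [rem_d /forallP min_d] | none]; last first.
  have [d rem_d min_d] := arg_minnP (worst_val (P x.1) st x.1 x.2) rem_e.
  move: (none d); have -> : (d \in remaining st x.2) = true by [].
  by move=> /= /negP []; apply/forallP=> d'; apply/implyP; exact: min_d.
by exists d; split=> // d' rem_d'; have := min_d d'; rewrite rem_d'.
Qed.

Lemma records_step st s x : records st s -> uniq s -> x \notin s ->
  records (step P st x) (rcons s x).
Proof.
move=> rec_s uniq_s Nx; have [d [pick_d rem_d _]] := pessimistic_pick_exists rec_s uniq_s Nx.
have [st_s st_inj] := rec_s; split.
  move=> y; rewrite mem_rcons in_cons; have [->|Nyx] /= := eqVneq y x.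
    by rewrite pick_d.
  by rewrite step_neq // st_s.
have free_d j : st (j, x.2) != Some d by move: rem_d; rewrite inE => /forallP.
move=> i j1 j2 e; have [E1|N1] := eqVneq (j1, i) x; have [E2|N2] := eqVneq (j2, i) x.
- by move: E1; rewrite -E2 => [[->]].
- rewrite E1 pick_d step_neq // => [[<-]] st_j2.
  by move: (free_d j2); rewrite -E1 /= st_j2 eqxx.
- rewrite E2 pick_d step_neq // => st_j1 [E]; subst e.
  by move: (free_d j1); rewrite -E2 /= st_j1 eqxx.
- by rewrite !step_neq //; exact: st_inj.
Qed.

Lemma run_rcons s x : run P (rcons s x) = step P (run P s) x.
Proof. by rewrite /run foldl_rcons. Qed.

Lemma records_run s : uniq s -> records (run P s) s.
Proof.
elim/last_ind: s => [|s x IHs].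
  by move=> _; split=> [x | i j1 j2 d]; rewrite /run /= ffunE.
rewrite rcons_uniq => /andP [Nx uniq_s]; rewrite run_rcons.
by apply: records_step => //; exact: IHs.
Qed.

Lemma available_step_neq st x j : st x = None -> x.1 != j ->
  available (step P st x) j \subset available st j.
Proof.
move=> st_x Nj; apply/subsetP=> b; rewrite !inE => /forallP avail_b; apply/forallP=> l.
have Njl : (j, l) != x by apply: contra Nj => /eqP <-.
have := avail_b l; rewrite step_neq //; case: (st (j, l)) => // rem_bl.
exact: (subsetP (remaining_step_sub l st_x)).
Qed.

Lemma available_step_eq st x d : st x = None -> step P st x x = Some d ->
  d \in remaining st x.2 -> available (step P st x) x.1 = [set b in available st x.1 | b x.2 == d].
Proof.
move=> st_x pick_d rem_d; apply/setP=> b; rewrite !inE.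
have other l : l != x.2 ->
    (if step P st x (x.1, l) is Some e then b l == e else b l \in remaining (step P st x) l)
  = (if st (x.1, l) is Some e then b l == e else b l \in remaining st l).
  move=> Nl; rewrite step_neq ?remaining_step_neq //.
  by apply: contraNneq Nl => <-.
apply/forallP/andP.
  move=> avail_b; have bd : b x.2 == d by have := avail_b x.2; rewrite -surjective_pairing pick_d.
  split=> //; apply/forallP=> l; have [->|Nl] := eqVneq l x.2.
    by rewrite -surjective_pairing st_x (eqP bd).
  by rewrite -other.
case=> /forallP avail_b bd l; have [->|Nl] := eqVneq l x.2.
  by rewrite -surjective_pairing pick_d.
by rewrite other.
Qed.

Lemma available_class_nonempty st s j i d : records st s -> uniq s -> st (j, i) = None ->
  d \in remaining st i -> exists2 b : bundle, b \in available st j & b i = d.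
Proof.
move=> rec_s uniq_s st_ji rem_d.
pose b : bundle := [ffun l => if l == i then d else
   if st (j, l) is Some e then e else odflt d [pick e in remaining st l]].
exists b; last by rewrite ffunE eqxx.
rewrite inE; apply/forallP=> l; rewrite ffunE; have [->|Nl] := eqVneq l i.
  by rewrite st_ji.
case st_jl: (st (j, l)) => [e|] //.
have Njl : (j, l) \notin s by case: rec_s => st_s _; rewrite -st_s st_jl.
have [e0 rem_e0] := remaining_nonempty rec_s uniq_s Njl.
by case: pickP => [e' // | none]; move: (none e0); rewrite rem_e0.
Qed.

Lemma worst_val_attained st s j i d : records st s -> uniq s -> st (j, i) = None ->
  d \in remaining st i -> exists2 b : bundle, (b \in available st j) && (b i == d) &
  worst_val (P j) st j i d = Rank (P j) b.
Proof.
move=> rec_s uniq_s st_ji rem_d.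
have [b0 avail_b0 b0d] := available_class_nonempty rec_s uniq_s st_ji rem_d.
have : 0 < #|[pred b : bundle | (b \in available st j) && (b i == d)]|.
  by apply/card_gt0P; exists b0; rewrite inE avail_b0 b0d eqxx.
by case/(eq_bigmax_cond (Rank (P j))) => b class_b max_b; exists b.
Qed.

Definition worst_available st j := \max_(b in available st j) Rank (P j) b.

Lemma worst_available_step_neq st x j : st x = None -> x.1 != j ->
  worst_available (step P st x) j <= worst_available st j.
Proof.
move=> st_x Nj; apply/bigmax_leqP=> b avail_b; apply: leq_bigmax_cond.
exact: subsetP (available_step_neq st_x Nj) _ avail_b.
Qed.

Lemma worst_available_step_eq st s j i : lin_order (P j) -> records st s -> uniq s ->
  (j, i) \notin s ->
  worst_available (step P st (j, i)) j + (n.-1 - picks s i) <= worst_available st j.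
Proof.
move=> lin_Pj rec_s uniq_s Nji.
have [d [pick_d rem_d min_d]] := pessimistic_pick_exists rec_s uniq_s Nji.
rewrite /= in rem_d min_d; have st_ji := records_None rec_s Nji.
have -> : worst_available (step P st (j, i)) j = worst_val (P j) st j i d.
  rewrite /worst_available (available_step_eq st_ji pick_d rem_d) /worst_val.
  by apply: eq_bigl => b; rewrite !inE.
set w := worst_val (P j) st j i.
have w_inj : {in remaining st i &, injective w}.
  move=> d1 d2 rem_d1 rem_d2 E12.
  have [b1 /andP [_ /eqP b1d] E1] := worst_val_attained rec_s uniq_s st_ji rem_d1.
  have [b2 /andP [_ /eqP b2d] E2] := worst_val_attained rec_s uniq_s st_ji rem_d2.
  have Eb : b1 = b2 by apply: (Rank_inj lin_Pj); rewrite -E1 -E2.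
  by rewrite -b1d -b2d Eb.
have w_le d' : w d' <= worst_available st j.
  by apply/bigmax_leqP => b /andP [avail_b _]; exact: leq_bigmax_cond.
have w_win d' : d' \in remaining st i -> w d <= w d' < (worst_available st j).+1.
  by move=> rem_d'; rewrite min_d // ltnS w_le.
have := card_inj_window w_inj w_win; rewrite (card_remaining _ rec_s uniq_s).
have := picks_lt uniq_s Nji; have := w_le d; rewrite /=; lia.
Qed.

Lemma card_bundle : #|bundle| = n ^ p.
Proof. by rewrite card_ffun !card_ord. Qed.

Lemma worst_available_le st j : worst_available st j <= n ^ p.
Proof. by apply/bigmax_leqP=> b _; rewrite -card_bundle max_card. Qed.

Definition taken_before (O : seq slot) j i := picks (take (index (j, i) O) O) i.

Definition gain (O : seq slot) j := \sum_(i < p) (n.-1 - taken_before O j i).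

Lemma taken_before_cat O s r j i : s ++ (j, i) :: r = O -> (j, i) \notin s ->
  taken_before O j i = picks s i.
Proof.
move=> <- Nji; rewrite /taken_before index_cat (negbTE Nji) /= eqxx addn0.
by rewrite take_size_cat.
Qed.

Lemma uniq_prefix_rcons (O : seq slot) s x r : uniq O -> rcons s x ++ r = O ->
  uniq s /\ x \notin s.
Proof.
move=> uniq_O E; move: uniq_O; rewrite -E cat_uniq rcons_uniq.
by case/and3P=> /andP [Nx uniq_s] _ _.
Qed.

Lemma worst_available_run_gain O j : lin_order (P j) -> uniq O -> forall s r, s ++ r = O ->
  worst_available (run P s) j + \sum_(i < p | (j, i) \in s) (n.-1 - taken_before O j i) <= n ^ p.
Proof.
move=> lin_Pj uniq_O; elim/last_ind => [|s [a i] IHs] r E.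
  by rewrite big_pred0 // addn0 worst_available_le.
have [uniq_s Nai] := uniq_prefix_rcons uniq_O E.
have {}E : s ++ (a, i) :: r = O by rewrite -E cat_rcons.
have rec_s := records_run uniq_s; have {}IHs := IHs _ E.
have st_ai := records_None rec_s Nai.
rewrite run_rcons; have [Ea|Na] := eqVneq a j.
  subst a; have drop_W := worst_available_step_eq lin_Pj rec_s uniq_s Nai.
  rewrite (bigD1 i) /=; last by rewrite mem_rcons in_cons eqxx.
  rewrite (taken_before_cat E Nai) (eq_bigl (fun i' => (j, i') \in s)).
    by move: IHs drop_W; set S := \sum_(_ < p | _) _; lia.
  move=> i'; rewrite mem_rcons in_cons xpair_eqE eqxx /=.
  by have [->|] := eqVneq i' i; rewrite ?(negbTE Nai) ?andbT.
have drop_W := worst_available_step_neq st_ai (Na : (a, i).1 != j).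
rewrite (eq_bigl (fun i' => (j, i') \in s)).
  by move: IHs drop_W; set S := \sum_(_ < p | _) _; lia.
by move=> i'; rewrite mem_rcons in_cons xpair_eqE eq_sym (negbTE Na).
Qed.

Lemma Rank_outcome_gain O j : lin_order (P j) -> csam_order O ->
  Rank (P j) (outcome P O j) + gain O j <= n ^ p.
Proof.
move=> lin_Pj csam_O; have uniq_O := csam_uniq csam_O.
have := worst_available_run_gain lin_Pj uniq_O (cats0 O).
have -> : \sum_(i < p | (j, i) \in O) (n.-1 - taken_before O j i) = gain O j.
  by apply: eq_bigl => i; rewrite csam_mem.
suff : Rank (P j) (outcome P O j) <= worst_available (run P O) j by lia.
have [run_O _] := records_run uniq_O.
apply: leq_bigmax_cond; rewrite inE; apply/forallP=> l.
by have := run_O (j, l); rewrite csam_mem // /outcome ffunE; case: (run P O (j, l)).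
Qed.

End Allocation.

Lemma card_bigcup_le (I T : finType) (A : I -> {set T}) :
  #|\bigcup_i A i| <= \sum_i #|A i|.
Proof.
elim/big_rec2: _ => [|i k U _ le_Uk]; first by rewrite cards0.
by rewrite (leq_trans (leq_card_setU _ _)) // leq_add2l.
Qed.

Section Adversary.
Variables (n p : nat) (O : seq ('I_n.+1 * 'I_p)) (j : 'I_n.+1).
Notation bundle := (bundle n.+1 p).
Notation state := (state n.+1 p).
Notation slot := ('I_n.+1 * 'I_p)%type.
Implicit Types (st : state) (s : seq slot) (b : bundle) (i l : 'I_p) (a : 'I_n.+1).

Definition max_bundle : bundle := [ffun => ord_max].

Definition on_axis b i :=
  [&& b i != ord_max, [forall l, (l != i) ==> (b l == ord_max)] & taken_before O j i <= b i].

Definition target_key b : nat :=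
  if [pick i | on_axis b i] is Some i then 2 + (size O - index (j, i) O)
  else b == max_bundle.

Definition item_sum b : nat := \sum_(l < p) (b l : nat).

(* Smaller keys are preferred: the other agents want small items, so they take the items
   of every category in increasing order, while [j] ranks the axis bundles lowest, those
   of the categories she meets first at the very bottom, and [max_bundle] just above them. *)
Definition adversary a : rel bundle :=
  if a == j then key_rel target_key else key_rel item_sum.

Lemma adversary_lin a : lin_order (adversary a).
Proof. by rewrite /adversary; case: ifP => _; exact: key_rel_lin. Qed.

Lemma on_axis_uniq b i i' : on_axis b i -> on_axis b i' -> i = i'.
Proof.
case/and3P=> _ /forallP off_i _ /and3P [b_i' _ _]; apply/eqP; apply: contraNT b_i'.
by move=> Ni; have := off_i i'; rewrite eq_sym Ni.
Qed.

Lemma target_key_axis b i : on_axis b i -> target_key b = 2 + (size O - index (j, i) O).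
Proof.
move=> axis_i; rewrite /target_key; case: pickP => [i' axis_i' | none].
  by rewrite (on_axis_uniq axis_i' axis_i).
by move: (none i); rewrite axis_i.
Qed.

Lemma target_key_off_axis b : (forall i, ~~ on_axis b i) -> target_key b = (b == max_bundle).
Proof. by move=> off; rewrite /target_key; case: pickP => // i axis_i; case/negP: (off i). Qed.

Lemma target_key_max : target_key max_bundle = 1.
Proof.
rewrite target_key_off_axis ?eqxx // => i.
by rewrite /on_axis ffunE eqxx.
Qed.

Lemma item_sum_set b i (d : 'I_n.+1) :
  item_sum [ffun l => if l == i then d else b l] + b i = item_sum b + d.
Proof.
rewrite /item_sum (bigD1 i) //= [in RHS](bigD1 i) //= ffunE eqxx.
rewrite (eq_bigr (fun l => (b l : nat))) => [|l Nl]; last by rewrite ffunE (negbTE Nl).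
lia.
Qed.

Lemma adversary_worst_val_lt st s a i (d1 d2 : 'I_n.+1) : a != j -> records st s -> uniq s ->
  (a, i) \notin s -> d1 \in remaining st i -> d2 \in remaining st i -> d1 < d2 ->
  worst_val (adversary a) st a i d1 < worst_val (adversary a) st a i d2.
Proof.
move=> Na rec_s uniq_s Nai rem_d1 rem_d2 lt_d12.
have st_ai := records_None rec_s Nai.
have [b1 /andP [avail_b1 /eqP b1i] ->] := worst_val_attained adversary rec_s uniq_s st_ai rem_d1.
pose b2 : bundle := [ffun l => if l == i then d2 else b1 l].
have avail_b2 : b2 \in available st a.
  move: avail_b1; rewrite !inE => /forallP avail_b1; apply/forallP=> l; rewrite ffunE.
  by have [->|_] := eqVneq l i; [rewrite st_ai | exact: avail_b1].
apply: (@leq_trans (Rank (adversary a) b2)).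
  rewrite /adversary (negbTE Na); apply: Rank_key_lt.
  by have := item_sum_set b1 i d2; rewrite -/b2 b1i; lia.
by apply: leq_bigmax_cond; apply/andP; split=> //; rewrite /b2 ffunE eqxx.
Qed.

Lemma adversary_pick_min st s a i d e : a != j -> records st s -> uniq s -> (a, i) \notin s ->
  pessimistic_pick adversary st (a, i) d -> e \in remaining st i -> d <= e.
Proof.
move=> Na rec_s uniq_s Nai [_ rem_d min_d] rem_e; rewrite leqNgt; apply/negP=> lt_ed.
have := adversary_worst_val_lt Na rec_s uniq_s Nai rem_e rem_d lt_ed.
by rewrite ltnNge min_d.
Qed.

Lemma remaining_step_lowest st s a i d : a != j -> records st s -> uniq s ->
  (a, i) \notin s -> remaining st i = [set e : 'I_n.+1 | picks s i <= e] ->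
  pessimistic_pick adversary st (a, i) d ->
  remaining (step adversary st (a, i)) i = [set e : 'I_n.+1 | picks (rcons s (a, i)) i <= e].
Proof.
move=> Na rec_s uniq_s Nai rem_i pick_d; have [step_d rem_d _] := pick_d.
have Ed : (d : nat) = picks s i.
  apply/eqP; rewrite eqn_leq; move: (rem_d); rewrite /= rem_i inE => ->; rewrite andbT.
  have lt_n : picks s i < n.+1 by exact: (picks_lt uniq_s Nai).
  by apply: (adversary_pick_min (e := Ordinal lt_n) Na rec_s uniq_s Nai pick_d); rewrite rem_i inE.
rewrite (remaining_step_eq (records_None rec_s Nai) step_d) /= rem_i picks_rcons eqxx addn1.
by apply/setP=> e; rewrite !inE -val_eqE /= Ed ltn_neqAle eq_sym.
Qed.

Definition adversary_inv st s :=
  (forall l, (j, l) \in s -> st (j, l) = Some ord_max) /\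
  (forall l, (j, l) \notin s -> remaining st l = [set d : 'I_n.+1 | picks s l <= d]).

Lemma axis_bundle_on_axis i (d : 'I_n.+1) : d != ord_max -> taken_before O j i <= d ->
  on_axis [ffun l => if l == i then d else ord_max] i.
Proof.
move=> Nd le_d; rewrite /on_axis !ffunE eqxx Nd le_d andbT /=.
by apply/forallP=> l; apply/implyP=> Nl; rewrite ffunE (negbTE Nl).
Qed.

Section TargetTurn.
Variables (st : state) (s r : seq slot) (i : 'I_p).
Hypotheses (O_split : s ++ (j, i) :: r = O) (rec_s : records st s) (uniq_s : uniq s)
  (Nji : (j, i) \notin s) (inv_s : adversary_inv st s).

Lemma index_target_turn : index (j, i) O = size s.
Proof. by rewrite -O_split index_cat (negbTE Nji) /= eqxx addn0. Qed.

Lemma axis_bundle_available (d : 'I_n.+1) : d \in remaining st i ->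
  [ffun l => if l == i then d else ord_max] \in available st j.
Proof.
have [max_s rem_s] := inv_s; move=> rem_d; rewrite inE; apply/forallP=> l; rewrite ffunE.
have [->|Nl] := eqVneq l i; first by rewrite (records_None rec_s Nji).
case: (boolP ((j, l) \in s)) => [jl_s | Njl]; first by rewrite max_s.
by rewrite (records_None rec_s Njl) rem_s // inE -ltnS (picks_lt uniq_s Njl).
Qed.

(* An available bundle of the class of [ord_max] is either off all axes, or on the axis
   of a category that [j] meets after [i]. *)
Lemma target_key_max_class b : b \in available st j -> b i = ord_max ->
  target_key b < 2 + (size O - size s).
Proof.
move=> avail_b bi; case: (pickP (on_axis b)) => [i' axis_i' | off]; last first.
  by rewrite target_key_off_axis => [|i']; [case: (b == _) | rewrite off].
rewrite (target_key_axis axis_i') ltn_add2l -index_target_turn.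
have Ni : i' != i by apply: contraTneq axis_i' => ->; rewrite /on_axis bi eqxx.
have Nji' : (j, i') \notin s.
  apply: contraTN axis_i' => ji'_s; have [max_s _] := inv_s.
  move: avail_b; rewrite inE => /forallP /(_ i'); rewrite max_s // => /eqP bi'.
  by rewrite /on_axis bi' eqxx.
have : size s < index (j, i') O.
  rewrite -O_split index_cat (negbTE Nji') /= xpair_eqE eqxx eq_sym (negbTE Ni) /=.
  by rewrite addnS ltnS leq_addr.
move=> lt_si'; rewrite index_target_turn ltn_sub2l //.
exact: leq_trans lt_si' (index_size _ _).
Qed.

Lemma target_picks_max d : pessimistic_pick adversary st (j, i) d -> d = ord_max.
Proof.
case=> _ rem_d min_d; rewrite /= in rem_d min_d; apply/eqP; apply: contraT => Nd.
have [_ rem_s] := inv_s; have rem_i := rem_s i Nji.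
have rem_top : ord_max \in remaining st i by rewrite rem_i inE -ltnS (picks_lt uniq_s Nji).
pose ch : bundle := [ffun l => if l == i then d else ord_max].
have axis_ch : on_axis ch i.
  apply: axis_bundle_on_axis => //.
  by rewrite (taken_before_cat O_split Nji); move: rem_d; rewrite rem_i inE.
have [b /andP [avail_b /eqP bi] worst_b] :=
  worst_val_attained adversary rec_s uniq_s (records_None rec_s Nji) rem_top.
have : Rank (adversary j) b < Rank (adversary j) ch.
  rewrite /adversary eqxx; apply: Rank_key_lt.
  by rewrite (target_key_axis axis_ch) index_target_turn; exact: target_key_max_class.
have : Rank (adversary j) ch <= worst_val (adversary j) st j i d.
  apply: leq_bigmax_cond; apply/andP; split; first exact: axis_bundle_available.
  by rewrite ffunE eqxx.
by have := min_d _ rem_top; rewrite worst_b; lia.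
Qed.

End TargetTurn.

Lemma adversary_inv_step st s x r : s ++ x :: r = O -> records st s -> uniq s ->
  x \notin s -> adversary_inv st s -> adversary_inv (step adversary st x) (rcons s x).
Proof.
case: x => a i O_split rec_s uniq_s Nai inv_s; have [max_s rem_s] := inv_s.
have [d pick_d] := pessimistic_pick_exists adversary rec_s uniq_s Nai.
have rem_other l : (j, l) \notin rcons s (a, i) -> l != i ->
    remaining (step adversary st (a, i)) l = [set e : 'I_n.+1 | picks (rcons s (a, i)) l <= e].
  move=> Njl Nl; rewrite remaining_step_neq // rem_s; last first.
    by apply: contra Njl; rewrite mem_rcons in_cons => ->; rewrite orbT.
  by rewrite picks_rcons /= eq_sym (negbTE Nl) addn0.
have [Ea|Na] := eqVneq a j.
  subst a; have Ed := target_picks_max O_split rec_s uniq_s Nai inv_s pick_d; subst d.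
  have [step_d _ _] := pick_d; split=> l; rewrite mem_rcons in_cons.
    have [[->] _ | Nl] /= := eqVneq (j, l) (j, i); first by rewrite step_d.
    by rewrite step_neq // => /max_s.
  rewrite negb_or => /andP [Nl Njl]; apply: rem_other; last by apply: contraNneq Nl => ->.
  by rewrite mem_rcons in_cons negb_or Nl.
split=> l.
  rewrite mem_rcons in_cons xpair_eqE eq_sym (negbTE Na) /= => jl_s.
  by rewrite step_neq ?max_s // xpair_eqE eq_sym (negbTE Na).
move=> Njl; have [El|Nl] := eqVneq l i; last exact: rem_other.
subst l; apply: remaining_step_lowest Na rec_s uniq_s Nai _ pick_d; apply: rem_s.
by apply: contra Njl; rewrite mem_rcons in_cons orbC => ->.
Qed.

Lemma adversary_inv_run s r : uniq O -> s ++ r = O -> adversary_inv (run adversary s) s.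
Proof.
move=> uniq_O; elim/last_ind: s r => [|s x IHs] r E.
  split=> // l _; apply/setP=> d; rewrite !inE; apply/forallP=> a.
  by rewrite /run /= ffunE.
have [uniq_s Nx] := uniq_prefix_rcons uniq_O E.
have {}E : s ++ x :: r = O by rewrite -E cat_rcons.
rewrite run_rcons; apply: adversary_inv_step E (records_run _ uniq_s) uniq_s Nx (IHs _ E).
Qed.

Lemma outcome_adversary : csam_order O -> outcome adversary O j = max_bundle.
Proof.
move=> csam_O; have [max_O _] := adversary_inv_run (csam_uniq csam_O) (cats0 O).
by apply/ffunP=> l; rewrite !ffunE max_O // csam_mem.
Qed.

Lemma card_on_axis i : #|[set b | on_axis b i]| <= n - taken_before O j i.
Proof.
have axis_inj : {in [set b | on_axis b i] &, injective (fun b : bundle => b i : nat)}.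
  move=> b1 b2; rewrite !inE => /and3P [_ /forallP off1 _] /and3P [_ /forallP off2 _] E.
  apply/ffunP=> l; have [->|Nl] := eqVneq l i; first exact: val_inj.
  by move: (off1 l) (off2 l); rewrite Nl => /eqP -> /eqP ->.
apply: card_inj_window axis_inj _ => b; rewrite inE => /and3P [Nb _ ->] /=.
by rewrite ltn_neqAle -ltnS ltn_ord andbT; apply: contra Nb => /eqP Eb; apply/eqP/val_inj.
Qed.

Lemma card_target_key_gt1 : #|[set b | 1 < target_key b]| <= gain O j.
Proof.
have -> : [set b | 1 < target_key b] = \bigcup_i [set b | on_axis b i].
  apply/setP=> b; rewrite inE; apply/idP/bigcupP.
    case: (pickP (on_axis b)) => [i axis_i _ | off]; first by exists i; rewrite ?inE.
    by rewrite target_key_off_axis => [|i]; [case: (b == _) | rewrite off].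
  by case=> i _; rewrite inE => /target_key_axis ->.
apply: leq_trans (card_bigcup_le _) _; apply: leq_sum => i _; exact: card_on_axis.
Qed.

Lemma target_key_le1 b : target_key b <= 1 -> target_key b = (b == max_bundle).
Proof.
case: (pickP (on_axis b)) => [i /target_key_axis -> // | off _].
by rewrite target_key_off_axis // => i; rewrite off.
Qed.

Lemma Rank_adversary_gain : csam_order O ->
  n.+1 ^ p <= Rank (adversary j) (outcome adversary O j) + gain O j.
Proof.
move=> csam_O; rewrite outcome_adversary // -(card_bundle n.+1 p).
rewrite -(cardsC [set b | 1 < target_key b]) addnC leq_add ?card_target_key_gt1 //.
apply: subset_leq_card; apply/subsetP=> b; rewrite !inE -leqNgt /adversary eqxx.
move/target_key_le1; have [-> _ | _ key0] := eqVneq b max_bundle; first exact: leqnn.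
by apply/ltnW/tiebreak_lt; rewrite key0 target_key_max.
Qed.

End Adversary.

Lemma sum_ord_complement m : 2 * \sum_(k < m) (m.-1 - k) = m * m.-1.
Proof.
rewrite mul2n -addnn {2}(reindex_inj rev_ord_inj) -big_split /=.
rewrite (eq_bigr (fun=> m.-1)) => [|k _]; first by rewrite sum_nat_const card_ord.
by have := ltn_ord k; lia.
Qed.

Lemma index_rev (T : eqType) (s : seq T) x : uniq s -> x \in s ->
  index x (rev s) = (size s).-1 - index x s.
Proof.
move=> uniq_s s_x; have lt_x : index x s < size s by rewrite index_mem.
have nth_x : nth x (rev s) ((size s).-1 - index x s) = x.
  rewrite nth_rev; last lia.
  by rewrite (_ : _ - _ = index x s) ?nth_index //; lia.
by rewrite -{1}nth_x index_uniq ?rev_uniq ?size_rev //; lia.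
Qed.

Lemma sum_index_perm m (L : seq 'I_m) (F : nat -> nat) : perm_eq L (enum 'I_m) ->
  \sum_j F (index j L) = \sum_(k < m) F k.
Proof.
case: m L => [|m] L L_perm; first by rewrite !big_ord0.
have uniq_L : uniq L by rewrite (perm_uniq L_perm) enum_uniq.
have size_L : size L = m.+1 by rewrite (perm_size L_perm) size_enum_ord.
have enum_L : perm_eq (enum 'I_m.+1) L by rewrite perm_sym.
rewrite -big_enum (perm_big _ enum_L) /= (big_nth ord0) size_L big_mkord.
by apply: eq_bigr => k _; rewrite index_uniq ?size_L.
Qed.

Definition choosers n p (O : seq ('I_n * 'I_p)) (i : 'I_p) : seq 'I_n :=
  [seq x.1 | x <- O & x.2 == i].

Section Gains.
Variables (n p : nat) (O : seq ('I_n * 'I_p)).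
Hypothesis csam_O : csam_order O.

Lemma choosers_perm i : perm_eq (choosers O i) (enum 'I_n).
Proof.
apply: uniq_perm; rewrite ?enum_uniq //.
  rewrite map_inj_in_uniq ?filter_uniq ?(csam_uniq csam_O) //.
  by move=> [a b] [c d]; rewrite !mem_filter /= => /andP [/eqP -> _] /andP [/eqP -> _] ->.
move=> j; rewrite mem_enum; apply/mapP; exists (j, i) => //.
by rewrite mem_filter eqxx csam_mem.
Qed.

Lemma taken_before_index j i : taken_before O j i = index j (choosers O i).
Proof.
have := csam_uniq csam_O; case/splitPr: (csam_mem (j, i) csam_O) => s r.
rewrite cat_uniq => /and3P [_ /norP [Nji _] _].
rewrite (taken_before_cat erefl Nji) /choosers filter_cat map_cat /= eqxx /= index_cat.
have -> : (j \in [seq x.1 | x <- s & x.2 == i]) = false.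
  apply/mapP=> [[[a b]]]; rewrite mem_filter /= => /andP [/eqP -> ai_s] Ej.
  by move: Nji; rewrite Ej ai_s.
by rewrite /= eqxx addn0 size_map size_filter.
Qed.

Lemma sum_gain : \sum_j gain O j = p * \sum_(k < n) (n.-1 - k).
Proof.
rewrite exchange_big /= (eq_bigr (fun=> \sum_(k < n) (n.-1 - k))) => [|i _].
  by rewrite sum_nat_const card_ord.
under eq_bigr do rewrite taken_before_index.
exact: (sum_index_perm (fun k => n.-1 - k) (choosers_perm i)).
Qed.

Lemma exists_gain_le : 0 < n -> exists j, gain O j <= (n.-1 * p) %/ 2.
Proof.
move=> n_gt0; pose j0 := Ordinal n_gt0.
have [j _ min_j] := arg_minnP (gain O) (isT : j0 \in predT).
exists j; rewrite leq_divRL //.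
have : n * gain O j <= \sum_j' gain O j'.
  by rewrite -{1}[n]card_ord -sum_nat_const; apply: leq_sum => j' _; exact: min_j.
rewrite sum_gain -(leq_pmul2l n_gt0); have := sum_ord_complement n.
move: (\sum_(k < n) _) (gain O j) => S g; nia.
Qed.

End Gains.

Lemma flatten_if_eq (T : eqType) (U : Type) (s : seq T) x (A : seq U) : uniq s -> x \in s ->
  flatten [seq if y == x then A else [::] | y <- s] = A.
Proof.
elim: s => [|y s IHs] //= /andP [Ny uniq_s]; rewrite in_cons.
have [<- _|Nyx /= s_x] := eqVneq y x; last by rewrite IHs.
rewrite (_ : flatten _ = [::]) ?cats0 //; elim: s Ny {IHs uniq_s} => [|z s IHs] //=.
by rewrite in_cons negb_or eq_sym => /andP [/negbTE -> /IHs].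
Qed.

Lemma sum_alternate q a b : \sum_(0 <= i < q.*2) (if odd i then a else b) = q * (a + b).
Proof.
elim: q => [|q IHq]; first by rewrite big_geq.
by rewrite doubleS !big_nat_recr //= IHq odd_double /=; lia.
Qed.

Section Balanced.
Variables (n p : nat) (K : seq 'I_n).
Hypothesis K_perm : agent_order K.

Let phase_order (i : 'I_p) := if odd i then rev K else K.

Lemma agent_order_enum : perm_eq K (enum 'I_n).
Proof. by rewrite enumT -enum_setT. Qed.

Lemma phase_order_perm i : perm_eq (phase_order i) (enum 'I_n).
Proof. by rewrite /phase_order; case: odd; rewrite ?perm_rev agent_order_enum. Qed.

Lemma balanced_order_mem x : x \in balanced_order p K.
Proof.
case: x => j i; apply/flattenP; exists [seq (j', i) | j' <- phase_order i].
  by apply: map_f; rewrite mem_enum.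
by apply: map_f; rewrite (perm_mem (phase_order_perm i)) mem_enum.
Qed.

Lemma size_balanced_order : size (balanced_order p K) = #|{: 'I_n * 'I_p}|.
Proof.
rewrite size_flatten /shape -map_comp (eq_map (g := fun=> n)) => [|i /=]; last first.
  by rewrite size_map (perm_size (phase_order_perm i)) size_enum_ord.
by rewrite card_prod !card_ord sumnE big_map big_enum sum_nat_const card_ord mulnC.
Qed.

Lemma balanced_csam : csam_order (balanced_order p K).
Proof.
apply: uniq_perm; last 2 first.
- exact: enum_uniq.
- by move=> x; rewrite balanced_order_mem mem_enum inE.
apply: (leq_size_uniq (enum_uniq [set: 'I_n * 'I_p])) => [x _ | ].
  exact: balanced_order_mem.
by rewrite size_balanced_order -cardE cardsT.
Qed.

Lemma choosers_balanced i : choosers (balanced_order p K) i = phase_order i.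
Proof.
rewrite /choosers filter_flatten map_flatten -!map_comp.
rewrite (eq_map (g := fun i' => if i' == i then phase_order i else [::])) => [|i' /=].
  by rewrite -enumT flatten_if_eq ?enum_uniq ?mem_enum.
rewrite filter_map /=; have [-> | Ni] := eqVneq i' i.
  by rewrite (eq_filter (a2 := predT)) ?filter_predT -?map_comp ?map_id // => x /=; rewrite eqxx.
by rewrite (eq_filter (a2 := pred0)) ?filter_pred0 // => x /=; rewrite (negbTE Ni).
Qed.

Lemma gain_balanced j : ~~ odd p -> gain (balanced_order p K) j = (n.-1 * p) %/ 2.
Proof.
move=> even_p; have K_j : j \in K by rewrite (perm_mem agent_order_enum) mem_enum.
have size_K : size K = n by rewrite (perm_size agent_order_enum) size_enum_ord.
have lt_j : index j K < n by have := index_mem j K; rewrite K_j size_K.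
rewrite /gain (eq_bigr (fun i : 'I_p => if odd i then index j K else n.-1 - index j K)).
  rewrite -(big_mkord xpredT (fun i => if odd i then index j K else n.-1 - index j K)).
  rewrite -[p](odd_double_half p) (negbTE even_p) add0n sum_alternate subnKC; last lia.
  by rewrite -muln2 mulnA mulnK // mulnC.
move=> i _; rewrite (taken_before_index balanced_csam) choosers_balanced /phase_order.
case: odd => //; rewrite index_rev ?size_K; [lia | | exact: K_j].
by rewrite (perm_uniq agent_order_enum) enum_uniq.
Qed.

End Balanced.

Lemma ex_max_bounded (Q : nat -> Prop) N : (exists k, Q k) -> (forall k, Q k -> k <= N) ->
  exists2 k, Q k & forall k', Q k' -> k' <= k.
Proof.
elim: N => [|N IHN] [k0 Qk0] le_N.
  by exists k0 => // k' /le_N; rewrite leqn0 => /eqP ->.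
have [QN | NQN] := classic (Q N.+1); first by exists N.+1.
apply: IHN; first by exists k0.
by move=> k Qk; have := le_N k Qk; rewrite leq_eqVlt => /orP [/eqP Ek | //]; rewrite Ek in Qk.
Qed.

Lemma worst_case_egal_rank_exists n p (O : seq ('I_n * 'I_p)) (j0 : 'I_n) :
  exists k, worst_case_egal_rank O k.
Proof.
pose attained k := exists2 P, profile P & exists j, Rank (P j) (outcome P O j) = k.
have [k att_k max_k] : exists2 k, attained k & forall k', attained k' -> k' <= k.
  apply: (@ex_max_bounded _ (n ^ p)) => [| k [P _ [j <-]]]; last first.
    by rewrite -card_bundle max_card.
  exists (Rank (key_rel (fun=> 0)) (outcome (fun=> key_rel (fun=> 0)) O j0)).
  by exists (fun=> key_rel (fun=> 0)) => [a | ]; [exact: key_rel_lin | exists j0].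
exists k; split=> [P P_prof j | ]; first by apply: max_k; exists P => //; exists j.
by case: att_k => P P_prof att; exists P.
Qed.

Lemma worst_case_egal_rank_uniform_gain n p (O : seq ('I_n.+1 * 'I_p)) g :
  csam_order O -> (forall j, gain O j = g) -> worst_case_egal_rank O (n.+1 ^ p - g).
Proof.
move=> csam_O gain_g; split=> [P P_prof j | ].
  by have := Rank_outcome_gain (P_prof j) csam_O; rewrite gain_g; lia.
exists (adversary O ord0); split=> [a | ]; first exact: adversary_lin.
exists ord0; have := Rank_outcome_gain (adversary_lin O ord0 ord0) csam_O.
by have := Rank_adversary_gain ord0 csam_O; rewrite gain_g; lia.
Qed.

Lemma worst_case_egal_rank_ge n p (O : seq ('I_n.+1 * 'I_p)) k j :
  csam_order O -> worst_case_egal_rank O k -> n.+1 ^ p - gain O j <= k.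
Proof.
move=> csam_O [le_k _]; have := le_k _ (fun a => adversary_lin O j a) j.
by have := Rank_adversary_gain j csam_O; lia.
Qed.

Theorem proposition4 (n p : nat) :
  0 < n -> ~~ odd p ->
  (forall K : seq 'I_n, agent_order K ->
     worst_case_egal_rank (balanced_order p K) (n ^ p - ((n - 1) * p) %/ 2)) /\
  (forall O : seq ('I_n * 'I_p), csam_order O ->
     exists k, worst_case_egal_rank O k /\ n ^ p - ((n - 1) * p) %/ 2 <= k).
Proof.
case: n => [//|m] _ even_p; rewrite subn1 /=; split=> [K K_perm | O csam_O].
  apply: worst_case_egal_rank_uniform_gain (balanced_csam p K_perm) _ => j.
  exact: gain_balanced K_perm j even_p.
have [j le_gain] := exists_gain_le csam_O (ltn0Sn m).
have [k wc_k] := worst_case_egal_rank_exists O ord0.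
exists k; split=> //; apply: leq_trans (worst_case_egal_rank_ge j csam_O wc_k).
by rewrite leq_sub2l.
Qed.
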